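(* Let $\lambda_0>1$. There exists $C_0>0$ depending only on $\lambda_0$ such that for every $\lambda\ge\lambda_0$ and every $k\ge1$: $$\frac{k}{|z_n(k)+1|}\le\begin{cases}2\sqrt2\,k&\text{for all }n\in\mathbb N_0,\\ 2\sqrt2\left(\frac{2}{\lambda_0}+1\right)\dfrac{k}{n+1}&\text{for }n>\lambda k^2,\\ C_0\dfrac{k}{n+1}&\text{for }n\ge\lambda k,\end{cases}$$ and moreover $\dfrac{|z_n(k)+1|}{k}\le1+\dfrac nk$ for all $n\in\mathbb N_0$.
   Context: For $n\in\mathbb N_0$ let $h_n^{(1)}$ be the spherical Hankel function of the first kind of order $n$, and for $r>0$ set $z_n(r):=r\,\dfrac{(h_n^{(1)})'(r)}{h_n^{(1)}(r)}$. *)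

From Stdlib Require Import Reals Lra Lia Factorial.
Open Scope R_scope.

Record Cx := mkCx { re : R; im : R }.

Definition Cadd (z w : Cx) : Cx := mkCx (re z + re w) (im z + im w).
Definition Cmul (z w : Cx) : Cx :=
  mkCx (re z * re w - im z * im w) (re z * im w + im z * re w).
Definition Cscal (a : R) (z : Cx) : Cx := mkCx (a * re z) (a * im z).
Definition Cinv (z : Cx) : Cx :=
  let d := re z ^ 2 + im z ^ 2 in mkCx (re z / d) (- im z / d).
Definition Cmod (z : Cx) : R := sqrt (re z ^ 2 + im z ^ 2).
Definition Czero : Cx := mkCx 0 0.
Definition Cone : Cx := mkCx 1 0.
Definition Cmi : Cx := mkCx 0 (-1).
Fixpoint Cpow (z : Cx) (n : nat) : Cx :=
  match n with O => Cone | S m => Cmul z (Cpow z m) end.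
Definition Cexpi (r : R) : Cx := mkCx (cos r) (sin r).

Fixpoint Csum (f : nat -> Cx) (n : nat) : Cx :=
  match n with O => f O | S m => Cadd (Csum f m) (f (S m)) end.

(* a_k(n+1/2) = (n+k)! / (2^k k! (n-k)!) *)
Definition hank_a (n k : nat) : R :=
  INR (fact (n + k)) / (2 ^ k * INR (fact k) * INR (fact (n - k))).

(* Spherical Hankel function of the first kind (DLMF 10.49.6):
   h_n^(1)(r) = e^{ir} sum_{k=0}^n i^{k-n-1} a_k(n+1/2) r^{-(k+1)},
   with i^{k-n-1} = (-i)^{n+1-k}. *)
Definition hankel1 (n : nat) (r : R) : Cx :=
  Cmul (Cexpi r)
    (Csum (fun k => Cscal (hank_a n k / r ^ (k + 1)) (Cpow Cmi (n + 1 - k))) n).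

(* z_n(r) = r h'(r) / h(r), where hp = h_n'(r) is supplied *)
Definition zn_of (n : nat) (r : R) (hp : Cx) : Cx :=
  Cscal r (Cmul hp (Cinv (hankel1 n r))).

(* Write h_n = e^{ir} P_n(1/r).  The three-term recurrence
   h_(n+2) = (2n+3)/r h_(n+1) - h_n and the derivative formula h_n' = (n/r) h_n - h_(n+1)
   give z_n(r) + 1 = n + 1 - r h_(n+1)/h_n.  The moduli and cross products of consecutive
   Hankel functions are polynomials in 1/r^2 with nonnegative coefficients
   (S_n = [modsq_poly n], F_n = [cross_poly n]): r^2 |h_n|^2 = S_n(1/r^2), r^3 Re(h_(n+1) conj h_n) = F_n(1/r^2), while the Wronskian is
   r^2 Im(h_(n+1) conj h_n) = -1.  Hence z_n(r) + 1 = (n + 1 - F_n/S_n) + i r/S_n, and the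
   coefficient bounds (n+2) S_n - 1 <= F_n <= (2n+1) S_n with S_n >= 1 give
   1/2 <= |z_n + 1| <= n + r.  Lagrange's identity S_(n+1) S_n = F_n^2/r^2 + 1 yields
   F_(n-1)/S_n <= r^2/n, so |z_n + 1| >= -Re(z_n + 1) >= n - r^2/n, which is comparable to
   n + 1 as soon as n >= lambda r or n > lambda r^2. *)

From Stdlib Require Import Reals Lra Lia Factorial.
From Coquelicot Require Import Hierarchy Derive AutoDerive.
Open Scope R_scope.

Lemma Cx_ext (z w : Cx) : re z = re w -> im z = im w -> z = w.
Proof. destruct z, w; simpl; intros -> ->; reflexivity. Qed.

Lemma INR_fact_S m : INR (fact (S m)) = (INR m + 1) * INR (fact m).
Proof. rewrite fact_simpl, mult_INR, S_INR; ring. Qed.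

(* [hank_a n k] is junk for [k > n] (truncated [n - k]); padding it by zero makes the
   recurrences below hold for every [k]. *)
Definition hank_coef (n k : nat) : R := if (k <=? n)%nat then hank_a n k else 0.

Lemma hank_coef_0 n : hank_coef n 0 = 1.
Proof.
  unfold hank_coef, hank_a; simpl Nat.leb; cbv iota.
  rewrite Nat.add_0_r, Nat.sub_0_r; simpl.
  field; apply INR_fact_neq_0.
Qed.

Lemma hank_coef_gt n k : (n < k)%nat -> hank_coef n k = 0.
Proof. intros H; unfold hank_coef; destruct (Nat.leb_spec k n); [lia | reflexivity]. Qed.

Lemma hank_coef_ge0 n k : 0 <= hank_coef n k.
Proof.
  unfold hank_coef, hank_a; destruct (k <=? n)%nat; [| lra].
  pose proof (INR_fact_lt_0 (n + k)); pose proof (INR_fact_lt_0 k).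
  pose proof (INR_fact_lt_0 (n - k)); pose proof (pow_lt 2 k ltac:(lra)).
  apply Rlt_le, Rdiv_lt_0_compat; [lra |].
  repeat apply Rmult_lt_0_compat; assumption.
Qed.

Lemma hank_coef_succ n k :
  (INR n + 1 - INR k) * hank_coef (S n) k = (INR n + 1 + INR k) * hank_coef n k.
Proof.
  destruct (Compare_dec.le_lt_dec k n) as [Hk | Hk].
  - destruct (Nat.le_exists_sub k n Hk) as [d [-> _]].
    unfold hank_coef, hank_a.
    destruct (Nat.leb_spec k (S (d + k))); [| lia].
    destruct (Nat.leb_spec k (d + k)); [| lia].
    replace (S (d + k) + k)%nat with (S (d + k + k)) by lia.
    replace (S (d + k) - k)%nat with (S d) by lia.
    replace (d + k - k)%nat with d by lia.
    repeat rewrite ?INR_fact_S, ?plus_INR.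
    pose proof (INR_fact_neq_0 k); pose proof (INR_fact_neq_0 d); pose proof (pos_INR d);
    pose proof (pow_nonzero 2 k ltac:(lra)).
    field; repeat split; lra.
  - rewrite (hank_coef_gt n k Hk).
    destruct (Nat.eq_dec k (S n)) as [-> | Hne].
    + rewrite S_INR; ring.
    + rewrite hank_coef_gt by lia; ring.
Qed.

Lemma hank_coef_succ_index n k :
  2 * (INR k + 1) * hank_coef n (S k) = (INR n + INR k + 1) * (INR n - INR k) * hank_coef n k.
Proof.
  destruct (Compare_dec.le_lt_dec (S k) n) as [Hk | Hk].
  - destruct (Nat.le_exists_sub (S k) n Hk) as [d [-> _]].
    unfold hank_coef, hank_a.
    destruct (Nat.leb_spec (S k) (d + S k)); [| lia].
    destruct (Nat.leb_spec k (d + S k)); [| lia].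
    replace (d + S k + S k)%nat with (S (S (d + k + k))) by lia.
    replace (d + S k + k)%nat with (S (d + k + k)) by lia.
    replace (d + S k - S k)%nat with d by lia.
    replace (d + S k - k)%nat with (S d) by lia.
    repeat rewrite ?INR_fact_S, ?plus_INR, ?S_INR; simpl pow.
    pose proof (INR_fact_neq_0 k); pose proof (INR_fact_neq_0 d); pose proof (pos_INR d);
    pose proof (pos_INR k); pose proof (pow_nonzero 2 k ltac:(lra)).
    field; repeat split; lra.
  - rewrite (hank_coef_gt n (S k) Hk).
    destruct (Nat.eq_dec k n) as [-> | Hne].
    + ring.
    + rewrite hank_coef_gt by lia; ring.
Qed.

Lemma hank_coef_rec n k :
  hank_coef (S (S n)) (S k) = (2 * INR n + 3) * hank_coef (S n) k + hank_coef n (S k).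
Proof.
  pose proof (hank_coef_succ_index (S (S n)) k) as I2; pose proof (hank_coef_succ (S n) k) as S1.
  pose proof (hank_coef_succ_index n k) as I0; pose proof (hank_coef_succ n k) as S0.
  rewrite !S_INR in *; pose proof (pos_INR n); pose proof (pos_INR k).
  set (A := hank_coef (S n) k) in *.
  assert (HX : 2 * (INR k + 1) * hank_coef (S (S n)) (S k)
               = (INR n + INR k + 3) * (INR n + INR k + 2) * A).
  { rewrite I2.
    transitivity ((INR n + INR k + 3) * ((INR n + 1 + 1 - INR k) * hank_coef (S (S n)) k));
      [ring | rewrite S1; ring]. }
  assert (HY : 2 * (INR k + 1) * hank_coef n (S k) = (INR n - INR k) * (INR n + 1 - INR k) * A).
  { apply (Rmult_eq_reg_l (INR n + INR k + 1)); [| lra].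
    rewrite I0.
    transitivity ((INR n + INR k + 1) * (INR n - INR k) * ((INR n + 1 + INR k) * hank_coef n k));
      [ring | rewrite <- S0; ring]. }
  apply (Rmult_eq_reg_l (2 * (INR k + 1))); [| lra].
  rewrite HX, (Rmult_plus_distr_l (2 * (INR k + 1))), HY; ring.
Qed.

Lemma Csum_ext f g n : (forall k, (k <= n)%nat -> f k = g k) -> Csum f n = Csum g n.
Proof.
  induction n as [| n IH]; intros H; simpl.
  - apply H; lia.
  - rewrite IH, (H (S n)); [reflexivity | lia | intros; apply H; lia].
Qed.

Lemma Csum_Cadd f g n : Csum (fun k => Cadd (f k) (g k)) n = Cadd (Csum f n) (Csum g n).
Proof.
  induction n as [| n IH]; simpl; [reflexivity |].
  rewrite IH; apply Cx_ext; simpl; ring.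
Qed.

Lemma Csum_Cscal c f n : Csum (fun k => Cscal c (f k)) n = Cscal c (Csum f n).
Proof.
  induction n as [| n IH]; simpl; [reflexivity |].
  rewrite IH; apply Cx_ext; simpl; ring.
Qed.

Lemma Csum_shift f n : Csum f (S n) = Cadd (f O) (Csum (fun k => f (S k)) n).
Proof.
  induction n as [| n IH]; [reflexivity |].
  change (Csum f (S (S n))) with (Cadd (Csum f (S n)) (f (S (S n)))).
  rewrite IH; simpl; apply Cx_ext; simpl; ring.
Qed.

Lemma Csum_pad f n m : (forall k, (n < k)%nat -> f k = Czero) -> Csum f (n + m) = Csum f n.
Proof.
  intros H; induction m as [| m IH]; [rewrite Nat.add_0_r; reflexivity |].
  rewrite Nat.add_succ_r; simpl; rewrite IH, H by lia.
  apply Cx_ext; simpl; ring.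
Qed.

Lemma Cpow_Cmi_SS m : Cpow Cmi (S (S m)) = Cscal (-1) (Cpow Cmi m).
Proof. apply Cx_ext; simpl; ring. Qed.

Definition hankel_term (n k : nat) (r : R) : Cx :=
  Cscal (hank_coef n k / r ^ (k + 1)) (Cpow Cmi (n + 1 - k)).

Lemma hankel1_Csum n m r :
  hankel1 n r = Cmul (Cexpi r) (Csum (fun k => hankel_term n k r) (n + m)).
Proof.
  rewrite Csum_pad.
  - unfold hankel1; f_equal; apply Csum_ext; intros k Hk.
    unfold hankel_term, hank_coef; destruct (Nat.leb_spec k n); [reflexivity | lia].
  - intros k Hk; unfold hankel_term; rewrite hank_coef_gt by exact Hk.
    apply Cx_ext; simpl; unfold Rdiv; ring.
Qed.

Lemma hankel_term_rec0 n r : hankel_term (S (S n)) 0 r = Cscal (-1) (hankel_term n 0 r).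
Proof.
  unfold hankel_term; rewrite !hank_coef_0.
  replace (S (S n) + 1 - 0)%nat with (S (S (n + 1 - 0))) by lia.
  rewrite Cpow_Cmi_SS; apply Cx_ext; simpl; ring.
Qed.

Lemma hankel_term_rec n k r : r <> 0 ->
  hankel_term (S (S n)) (S k) r =
  Cadd (Cscal ((2 * INR n + 3) / r) (hankel_term (S n) k r)) (Cscal (-1) (hankel_term n (S k) r)).
Proof.
  intros Hr; pose proof (pow_nonzero r (k + 1) Hr).
  unfold hankel_term; rewrite hank_coef_rec.
  replace (S (S n) + 1 - S k)%nat with (S n + 1 - k)%nat by lia.
  replace (S k + 1)%nat with (S (k + 1)) by lia.
  destruct (Compare_dec.le_lt_dec k n) as [Hk | Hk].
  - replace (S n + 1 - k)%nat with (S (S (n + 1 - S k))) by lia.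
    rewrite Cpow_Cmi_SS; apply Cx_ext; simpl; field; auto.
  - rewrite (hank_coef_gt n (S k)) by lia.
    apply Cx_ext; simpl; field; auto.
Qed.

Lemma hankel1_rec n r : r <> 0 ->
  hankel1 (S (S n)) r =
  Cadd (Cscal ((2 * INR n + 3) / r) (hankel1 (S n) r)) (Cscal (-1) (hankel1 n r)).
Proof.
  intros Hr.
  rewrite (hankel1_Csum (S (S n)) 0), (hankel1_Csum (S n) 0), (hankel1_Csum n 2).
  replace (n + 2)%nat with (S (S n)) by lia; rewrite !Nat.add_0_r.
  rewrite (Csum_shift (fun k => hankel_term (S (S n)) k r)),
    (Csum_shift (fun k => hankel_term n k r)).
  rewrite (Csum_ext _ _ (S n) (fun k Hk => hankel_term_rec n k r Hr)).
  rewrite hankel_term_rec0, Csum_Cadd, !Csum_Cscal.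
  apply Cx_ext; simpl; ring.
Qed.

Lemma derivable_pt_lim_ext_pos f g r l : (forall t, 0 < t -> f t = g t) -> 0 < r ->
  derivable_pt_lim g r l -> derivable_pt_lim f r l.
Proof.
  intros Hfg Hr Dg; apply is_derive_Reals in Dg; apply is_derive_Reals.
  apply (is_derive_ext_loc g f); [| exact Dg].
  apply (filter_imp (fun t => 0 < t)); [intros t Ht; symmetry; apply Hfg, Ht |].
  apply (open_gt 0 r Hr).
Qed.

Lemma derivable_pt_lim_three_term (f0 f1 f2 f3 : R -> R) n r : 0 < r ->
  (forall t, 0 < t -> f2 t = (2 * INR n + 3) / t * f1 t - f0 t) ->
  (forall t, 0 < t -> f3 t = (2 * INR (S n) + 3) / t * f2 t - f1 t) ->
  derivable_pt_lim f0 r (INR n / r * f0 r - f1 r) ->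
  derivable_pt_lim f1 r (INR (S n) / r * f1 r - f2 r) ->
  derivable_pt_lim f2 r (INR (S (S n)) / r * f2 r - f3 r).
Proof.
  intros Hr E2 E3 D0 D1.
  apply (derivable_pt_lim_ext_pos _ (fun t => (2 * INR n + 3) / t * f1 t - f0 t) r); auto.
  apply is_derive_Reals in D0, D1; apply is_derive_Reals.
  auto_derive.
  - repeat split; try (eexists; eassumption); lra.
  - replace (Derive (fun x : R => f0 x) r) with (INR n / r * f0 r - f1 r)
      by (symmetry; apply is_derive_unique, D0).
    replace (Derive (fun x : R => f1 x) r) with (INR (S n) / r * f1 r - f2 r)
      by (symmetry; apply is_derive_unique, D1).
    rewrite (E3 r Hr), (E2 r Hr), !S_INR; field; lra.
Qed.

Lemma hankel1_0 r : r <> 0 -> hankel1 0 r = mkCx (sin r / r) (- cos r / r).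
Proof.
  intros Hr; apply Cx_ext; unfold hankel1, hank_a; simpl; field; auto.
Qed.

Lemma hankel1_1 r : r <> 0 ->
  hankel1 1 r = mkCx (- cos r / r + sin r / r ^ 2) (- sin r / r - cos r / r ^ 2).
Proof.
  intros Hr; apply Cx_ext; unfold hankel1, hank_a; simpl; field; auto.
Qed.

Lemma hankel1_derive_01 (p : Cx -> R) r : (p = re \/ p = im) -> 0 < r ->
  derivable_pt_lim (fun t => p (hankel1 0 t)) r (INR 0 / r * p (hankel1 0 r) - p (hankel1 1 r)) /\
  derivable_pt_lim (fun t => p (hankel1 1 t)) r (INR 1 / r * p (hankel1 1 r) - p (hankel1 2 r)).
Proof.
  intros Hp Hr; assert (Hr0 : r <> 0) by lra.
  rewrite (hankel1_rec 0 r Hr0); simpl INR.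
  rewrite (hankel1_0 r Hr0), (hankel1_1 r Hr0).
  destruct Hp as [-> | ->]; cbn [re im Cadd Cscal]; split.
  - apply (derivable_pt_lim_ext_pos _ (fun t => sin t / t));
      [intros t Ht; rewrite hankel1_0 by lra; reflexivity | exact Hr |].
    apply is_derive_Reals; auto_derive; [lra | field; lra].
  - apply (derivable_pt_lim_ext_pos _ (fun t => - cos t / t + sin t / t ^ 2));
      [intros t Ht; rewrite hankel1_1 by lra; reflexivity | exact Hr |].
    apply is_derive_Reals; auto_derive; [repeat split; intro Hc; nra | field; lra].
  - apply (derivable_pt_lim_ext_pos _ (fun t => - cos t / t));
      [intros t Ht; rewrite hankel1_0 by lra; reflexivity | exact Hr |].
    apply is_derive_Reals; auto_derive; [lra | field; lra].
  - apply (derivable_pt_lim_ext_pos _ (fun t => - sin t / t - cos t / t ^ 2));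
      [intros t Ht; rewrite hankel1_1 by lra; reflexivity | exact Hr |].
    apply is_derive_Reals; auto_derive; [repeat split; intro Hc; nra | field; lra].
Qed.

Lemma hankel1_derive (p : Cx -> R) n r : (p = re \/ p = im) -> 0 < r ->
  derivable_pt_lim (fun t => p (hankel1 n t)) r (INR n / r * p (hankel1 n r) - p (hankel1 (S n) r)).
Proof.
  intros Hp Hr.
  assert (Hrec : forall m t, 0 < t ->
    p (hankel1 (S (S m)) t) = (2 * INR m + 3) / t * p (hankel1 (S m) t) - p (hankel1 m t)).
  { intros m t Ht; rewrite hankel1_rec by lra; destruct Hp as [-> | ->]; simpl; ring. }
  enough (H : forall m,
    derivable_pt_lim (fun t => p (hankel1 m t)) r
      (INR m / r * p (hankel1 m r) - p (hankel1 (S m) r)) /\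
    derivable_pt_lim (fun t => p (hankel1 (S m) t)) r
      (INR (S m) / r * p (hankel1 (S m) r) - p (hankel1 (S (S m)) r))) by apply H.
  induction m as [| m [D0 D1]]; [apply hankel1_derive_01; assumption |].
  split; [exact D1 |].
  exact (derivable_pt_lim_three_term (fun t => p (hankel1 m t)) (fun t => p (hankel1 (S m) t))
    (fun t => p (hankel1 (S (S m)) t)) (fun t => p (hankel1 (S (S (S m))) t)) m r Hr
    (Hrec m) (Hrec (S m)) D0 D1).
Qed.

Lemma sum_f_R0_pad f n m : (forall j, (n < j)%nat -> f j = 0) -> sum_f_R0 f (n + m) = sum_f_R0 f n.
Proof.
  intros H; induction m as [| m IH]; [rewrite Nat.add_0_r; reflexivity |].
  rewrite Nat.add_succ_r, tech5, IH, H by lia; ring.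
Qed.

Lemma sum_f_R0_ge_first f n : (forall j, (0 < j)%nat -> 0 <= f j) -> f O <= sum_f_R0 f n.
Proof.
  intros H; induction n as [| n IH]; simpl; [lra |].
  pose proof (H (S n) (Nat.lt_0_succ n)); lra.
Qed.

Fixpoint odd_double_fact (j : nat) : R :=
  match j with O => 1 | S j => (2 * INR j + 1) * odd_double_fact j end.

Lemma odd_double_fact_ge0 j : 0 <= odd_double_fact j.
Proof.
  induction j as [| j IH]; simpl; [lra |].
  pose proof (pos_INR j); apply Rmult_le_pos; lra.
Qed.

(* [odd_double_fact j = (2j-1)!!], so [modsq_coef n j = (2j)! (n+j)! / (4^j j!^2 (n-j)!)],
   the coefficients of [r^2 |h_n(r)|^2] as a polynomial in [1/r^2]. *)
Definition modsq_coef (n j : nat) : R := hank_coef n j * odd_double_fact j.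
Definition modsq_poly (n : nat) (x : R) : R := sum_f_R0 (fun j => modsq_coef n j * x ^ j) n.
Definition cross_poly (n : nat) (x : R) : R :=
  sum_f_R0 (fun j => (INR j + INR n + 1) * modsq_coef n j * x ^ j) n.

Lemma modsq_coef_0 n : modsq_coef n 0 = 1.
Proof. unfold modsq_coef; rewrite hank_coef_0; simpl; ring. Qed.

Lemma modsq_coef_gt n j : (n < j)%nat -> modsq_coef n j = 0.
Proof. intros H; unfold modsq_coef; rewrite hank_coef_gt by exact H; ring. Qed.

Lemma modsq_coef_ge0 n j : 0 <= modsq_coef n j.
Proof. apply Rmult_le_pos; [apply hank_coef_ge0 | apply odd_double_fact_ge0]. Qed.

Lemma modsq_coef_succ n j :
  (INR j + INR n + 1) * modsq_coef n j = (INR n + 1 - INR j) * modsq_coef (S n) j.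
Proof.
  unfold modsq_coef; rewrite <- !Rmult_assoc, hank_coef_succ; ring.
Qed.

Lemma modsq_coef_rec n j :
  modsq_coef (S (S n)) (S j) = (2 * INR n + 3) * (2 * INR j + 1) * modsq_coef (S n) j
                               + modsq_coef n (S j).
Proof. unfold modsq_coef; simpl odd_double_fact; rewrite hank_coef_rec; ring. Qed.

Lemma modsq_poly_ge1 n x : 0 <= x -> 1 <= modsq_poly n x.
Proof.
  intros Hx; unfold modsq_poly.
  replace 1 with (modsq_coef n 0 * x ^ 0) by (rewrite modsq_coef_0; simpl; ring).
  apply (sum_f_R0_ge_first (fun j => modsq_coef n j * x ^ j)); intros j _.
  apply Rmult_le_pos; [apply modsq_coef_ge0 | apply pow_le, Hx].
Qed.

Lemma cross_poly_lower n x : 0 <= x -> (INR n + 2) * modsq_poly n x - 1 <= cross_poly n x.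
Proof.
  intros Hx.
  enough (H : -1 <= cross_poly n x - (INR n + 2) * modsq_poly n x) by lra.
  unfold cross_poly, modsq_poly; rewrite scal_sum, <- minus_sum.
  replace (-1)
    with ((INR 0 + INR n + 1) * modsq_coef n 0 * x ^ 0 - modsq_coef n 0 * x ^ 0 * (INR n + 2))
    by (rewrite modsq_coef_0; simpl; ring).
  apply (sum_f_R0_ge_first (fun j =>
    (INR j + INR n + 1) * modsq_coef n j * x ^ j - modsq_coef n j * x ^ j * (INR n + 2))).
  intros j Hj.
  replace ((INR j + INR n + 1) * modsq_coef n j * x ^ j - modsq_coef n j * x ^ j * (INR n + 2))
    with ((INR j - 1) * (modsq_coef n j * x ^ j)) by ring.
  apply le_INR in Hj; simpl in Hj.
  apply Rmult_le_pos; [lra |].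
  apply Rmult_le_pos; [apply modsq_coef_ge0 | apply pow_le, Hx].
Qed.

Lemma cross_poly_upper n x : 0 <= x -> cross_poly n x <= (2 * INR n + 1) * modsq_poly n x.
Proof.
  intros Hx.
  enough (H : 0 <= (2 * INR n + 1) * modsq_poly n x - cross_poly n x) by lra.
  unfold cross_poly, modsq_poly; rewrite scal_sum, <- minus_sum.
  apply cond_pos_sum; intros j.
  replace (modsq_coef n j * x ^ j * (2 * INR n + 1) - (INR j + INR n + 1) * modsq_coef n j * x ^ j)
    with ((INR n - INR j) * modsq_coef n j * x ^ j) by ring.
  apply Rmult_le_pos; [| apply pow_le, Hx].
  destruct (Compare_dec.le_lt_dec j n) as [Hj | Hj].
  - apply Rmult_le_pos; [apply le_INR in Hj; lra | apply modsq_coef_ge0].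
  - rewrite modsq_coef_gt by exact Hj; lra.
Qed.

Lemma cross_poly_succ n x :
  cross_poly (S n) x = (2 * INR n + 3) * modsq_poly (S n) x - cross_poly n x.
Proof.
  unfold cross_poly, modsq_poly.
  rewrite <- (sum_f_R0_pad (fun j => (INR j + INR n + 1) * modsq_coef n j * x ^ j) n 1)
    by (intros j Hj; rewrite modsq_coef_gt by exact Hj; ring).
  replace (n + 1)%nat with (S n) by lia.
  rewrite scal_sum, <- minus_sum; apply sum_eq; intros j _.
  replace ((INR j + INR n + 1) * modsq_coef n j * x ^ j)
    with ((INR n + 1 - INR j) * modsq_coef (S n) j * x ^ j) by (rewrite <- modsq_coef_succ; ring).
  rewrite S_INR; ring.
Qed.

Lemma modsq_poly_rec n x :
  modsq_poly (S (S n)) x =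
  (2 * INR n + 3) ^ 2 * x * modsq_poly (S n) x - 2 * (2 * INR n + 3) * x * cross_poly n x
  + modsq_poly n x.
Proof.
  unfold cross_poly, modsq_poly.
  rewrite <- (sum_f_R0_pad (fun j => (INR j + INR n + 1) * modsq_coef n j * x ^ j) n 1)
    by (intros j Hj; rewrite modsq_coef_gt by exact Hj; ring).
  rewrite <- (sum_f_R0_pad (fun j => modsq_coef n j * x ^ j) n 2)
    by (intros j Hj; rewrite modsq_coef_gt by exact Hj; ring).
  replace (n + 1)%nat with (S n) by lia; replace (n + 2)%nat with (S (S n)) by lia.
  rewrite !(decomp_sum _ (S (S n))) by lia; simpl Init.Nat.pred.
  rewrite !modsq_coef_0, !scal_sum, <- minus_sum.
  assert (Htail : sum_f_R0 (fun j => modsq_coef (S (S n)) (S j) * x ^ S j) (S n) =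
    sum_f_R0 (fun j =>
      modsq_coef (S n) j * x ^ j * ((2 * INR n + 3) ^ 2 * x)
      - (INR j + INR n + 1) * modsq_coef n j * x ^ j * (2 * (2 * INR n + 3) * x)) (S n)
    + sum_f_R0 (fun j => modsq_coef n (S j) * x ^ S j) (S n)).
  { rewrite <- plus_sum; apply sum_eq; intros j _.
    rewrite modsq_coef_rec.
    replace ((INR j + INR n + 1) * modsq_coef n j)
      with ((INR n + 1 - INR j) * modsq_coef (S n) j) by (rewrite modsq_coef_succ; ring).
    simpl pow; ring. }
  rewrite Htail; ring.
Qed.

Definition hankel_invariants (n : nat) (r : R) : Prop :=
  let a := hankel1 n r in
  let b := hankel1 (S n) r in
  r ^ 2 * (re a ^ 2 + im a ^ 2) = modsq_poly n (/ r ^ 2) /\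
  r ^ 2 * (re b ^ 2 + im b ^ 2) = modsq_poly (S n) (/ r ^ 2) /\
  r ^ 3 * (re b * re a + im b * im a) = cross_poly n (/ r ^ 2) /\
  r ^ 2 * (im b * re a - re b * im a) = -1.

Lemma hankel_invariants_0 r : 0 < r -> hankel_invariants 0 r.
Proof.
  intros Hr; assert (Hr0 : r <> 0) by lra.
  assert (Hs11 : modsq_coef 1 1 = 1) by (unfold modsq_coef, hank_coef, hank_a; simpl; field).
  assert (Hsc : sin r ^ 2 + cos r ^ 2 = 1) by (rewrite <- (sin2_cos2 r); unfold Rsqr; ring).
  unfold hankel_invariants, modsq_poly, cross_poly; simpl sum_f_R0.
  rewrite hankel1_0, hankel1_1, !modsq_coef_0, Hs11 by exact Hr0; cbn [re im].
  repeat split.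
  - transitivity (sin r ^ 2 + cos r ^ 2); [field; auto | rewrite Hsc; field; auto].
  - transitivity ((1 + / r ^ 2) * (sin r ^ 2 + cos r ^ 2));
      [field; auto | rewrite Hsc; field; auto].
  - transitivity (sin r ^ 2 + cos r ^ 2); [field; auto | rewrite Hsc; field; auto].
  - transitivity (- (sin r ^ 2 + cos r ^ 2)); [field; auto | rewrite Hsc; field; auto].
Qed.

Lemma hankel_invariants_succ n r : 0 < r -> hankel_invariants n r -> hankel_invariants (S n) r.
Proof.
  intros Hr [Ha [Hb [Hab Hw]]]; assert (Hr0 : r <> 0) by lra.
  unfold hankel_invariants.
  rewrite (hankel1_rec n r Hr0); cbn [re im Cadd Cscal].
  rewrite modsq_poly_rec, cross_poly_succ, <- Ha, <- Hb, <- Hab.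
  repeat split; [field; auto | field; auto | etransitivity; [| exact Hw]; field; auto].
Qed.

Lemma hankel_invariants_all n r : 0 < r -> hankel_invariants n r.
Proof.
  intros Hr; induction n as [| n IH];
    [apply hankel_invariants_0 | apply hankel_invariants_succ]; assumption.
Qed.

(* Lagrange's identity |a|^2 |b|^2 = (Re a conj b)^2 + (Im a conj b)^2 applied to h_(n+1), h_n. *)
Lemma modsq_poly_mul n r : 0 < r ->
  modsq_poly (S n) (/ r ^ 2) * modsq_poly n (/ r ^ 2) = / r ^ 2 * cross_poly n (/ r ^ 2) ^ 2 + 1.
Proof.
  intros Hr; assert (Hr0 : r <> 0) by lra.
  destruct (hankel_invariants_all n r Hr) as [Ha [Hb [Hab Hw]]].
  rewrite <- Ha, <- Hb, <- Hab; replace 1 with ((-1) ^ 2) by ring; rewrite <- Hw.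
  field; auto.
Qed.

Lemma zn_add1 n r dre dim : 0 < r ->
  derivable_pt_lim (fun t => re (hankel1 n t)) r dre ->
  derivable_pt_lim (fun t => im (hankel1 n t)) r dim ->
  Cadd (zn_of n r (mkCx dre dim)) Cone =
  mkCx (INR n + 1 - cross_poly n (/ r ^ 2) / modsq_poly n (/ r ^ 2)) (r / modsq_poly n (/ r ^ 2)).
Proof.
  intros Hr Dre Dim; assert (Hr0 : r <> 0) by lra.
  assert (Edre := uniqueness_limite _ _ _ _ Dre (hankel1_derive re n r (or_introl eq_refl) Hr)).
  assert (Edim := uniqueness_limite _ _ _ _ Dim (hankel1_derive im n r (or_intror eq_refl) Hr)).
  pose proof (modsq_poly_ge1 n (/ r ^ 2) ltac:(apply Rlt_le, Rinv_0_lt_compat, pow_lt, Hr)) as HS.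
  destruct (hankel_invariants_all n r Hr) as [Ha [_ [Hab Hw]]]; cbv zeta in *.
  rewrite <- Ha in *; rewrite <- Hab.
  assert (Hh : re (hankel1 n r) ^ 2 + im (hankel1 n r) ^ 2 <> 0)
    by (intro E; rewrite E in HS; lra).
  unfold zn_of, Cinv, Cadd, Cscal, Cmul, Cone; cbn [re im]; subst dre dim.
  apply Cx_ext; cbn [re im].
  - field; auto.
  - assert (HW : im (hankel1 (S n) r) * re (hankel1 n r) - re (hankel1 (S n) r) * im (hankel1 n r)
                 = - / r ^ 2)
      by (apply (Rmult_eq_reg_l (r ^ 2)); [rewrite Hw; field; auto | apply pow_nonzero, Hr0]).
    transitivity (- r * (- / r ^ 2) / (re (hankel1 n r) ^ 2 + im (hankel1 n r) ^ 2));
      [rewrite <- HW; field; auto | field; auto].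
Qed.

Lemma Rdiv_le_contravar_l k c m : 0 <= k -> 0 < c -> c <= m -> k / m <= k / c.
Proof. intros; apply Rmult_le_compat_l, Rinv_le_contravar; assumption. Qed.

Lemma Cmod_ge_neg_re w : - re w <= Cmod w.
Proof.
  unfold Cmod; destruct (Rle_or_lt (- re w) 0) as [H | H].
  - pose proof (sqrt_pos (re w ^ 2 + im w ^ 2)); lra.
  -
rewrite <- (sqrt_pow2 (- re w)) by lra; apply sqrt_le_1_alt; nra.
Qed.

Lemma Cmod_le_add w a b : Rabs (re w) <= a -> Rabs (im w) <= b -> Cmod w <= a + b.
Proof.
  intros Ha Hb; pose proof (Rabs_pos (re w)); pose proof (Rabs_pos (im w)).
  unfold Cmod; rewrite <- (sqrt_pow2 (a + b)) by lra; apply sqrt_le_1_alt.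
  rewrite <- (pow2_abs (re w)), <- (pow2_abs (im w)); nra.
Qed.

Lemma Cmod_ge_half w t : 0 <= t <= 1 -> 1 - t <= - re w -> t <= im w -> 1 / 2 <= Cmod w.
Proof.
  intros Ht Hre Him; unfold Cmod.
  assert (H1 : (1 - t) ^ 2 <= re w ^ 2) by nra; assert (H2 : t ^ 2 <= im w ^ 2) by nra.
  rewrite <- (sqrt_pow2 (1 / 2)) by lra; apply sqrt_le_1_alt; nra.
Qed.

Lemma cross_ratio_le n r : 0 < r ->
  cross_poly n (/ r ^ 2) / modsq_poly (S n) (/ r ^ 2) <= r ^ 2 / (INR n + 1).
Proof.
  intros Hr; pose proof (pos_INR n) as Hn.
  assert (Hx : 0 <= / r ^ 2) by (apply Rlt_le, Rinv_0_lt_compat, pow_lt, Hr).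
  pose proof (modsq_poly_ge1 n _ Hx) as HS0; pose proof (modsq_poly_ge1 (S n) _ Hx) as HS1.
  pose proof (cross_poly_lower n _ Hx) as HF; pose proof (modsq_poly_mul n r Hr) as Hmul.
  set (S0 := modsq_poly n (/ r ^ 2)) in *; set (S1 := modsq_poly (S n) (/ r ^ 2)) in *;
    set (F := cross_poly n (/ r ^ 2)) in *.
  assert (HFS : (INR n + 1) * S0 <= F) by lra.
  assert (Hr2 : 0 < r ^ 2) by (apply pow_lt, Hr).
  assert (HF2 : F ^ 2 <= r ^ 2 * S1 * S0).
  { replace (r ^ 2 * S1 * S0) with (r ^ 2 * (S1 * S0)) by ring; rewrite Hmul.
    replace (r ^ 2 * (/ r ^ 2 * F ^ 2 + 1)) with (F ^ 2 + r ^ 2) by (field; lra); lra. }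
  assert (Hkey : F * (INR n + 1) <= r ^ 2 * S1).
  { apply (Rmult_le_reg_r S0); [lra |].
    assert (F * ((INR n + 1) * S0) <= F * F) by (apply Rmult_le_compat_l; nra).
    nra. }
  apply (Rmult_le_reg_r (S1 * (INR n + 1))); [nra |].
  replace (F / S1 * (S1 * (INR n + 1))) with (F * (INR n + 1)) by (field; lra).
  replace (r ^ 2 / (INR n + 1) * (S1 * (INR n + 1))) with (r ^ 2 * S1) by (field; lra).
  exact Hkey.
Qed.

Lemma zn_add1_Cmod_bounds n k dre dim : 1 <= k ->
  derivable_pt_lim (fun t => re (hankel1 n t)) k dre ->
  derivable_pt_lim (fun t => im (hankel1 n t)) k dim ->
  let m := Cmod (Cadd (zn_of n k (mkCx dre dim)) Cone) in
  1 / 2 <= m /\ m <= INR n + k /\ ((0 < n)%nat -> INR n - k ^ 2 / INR n <= m).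
Proof.
  intros Hk Dre Dim m; unfold m; rewrite (zn_add1 n k dre dim) by (lra || assumption).
  assert (Hx : 0 <= / k ^ 2) by (apply Rlt_le, Rinv_0_lt_compat, pow_lt; lra).
  pose proof (modsq_poly_ge1 n _ Hx) as HS; pose proof (cross_poly_lower n _ Hx) as HFl;
    pose proof (cross_poly_upper n _ Hx) as HFu.
  set (Sn := modsq_poly n (/ k ^ 2)) in *; set (Fn := cross_poly n (/ k ^ 2)) in *.
  assert (Hre : 1 - / Sn <= Fn / Sn - (INR n + 1) <= INR n).
  { split; apply (Rmult_le_reg_r Sn); try lra; unfold Rminus;
      rewrite Rmult_plus_distr_r; field_simplify; lra. }
  assert (Him : / Sn <= k / Sn <= k).
  { split; apply (Rmult_le_reg_r Sn); try lra; field_simplify; nra. }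
  assert (HS' : 0 < / Sn <= 1)
    by (split; [apply Rinv_0_lt_compat | rewrite <- Rinv_1; apply Rinv_le_contravar]; lra).
  split; [| split].
  - apply (Cmod_ge_half _ (/ Sn)); cbn [re im]; lra.
  - apply Cmod_le_add; cbn [re im]; [rewrite Rabs_left1 | rewrite Rabs_right]; lra.
  - intros Hn; destruct n as [| n]; [lia |].
    eapply Rle_trans; [| apply Cmod_ge_neg_re]; cbn [re im].
    pose proof (cross_ratio_le n k ltac:(lra)) as Hratio.
    rewrite S_INR in *.
    unfold Fn; rewrite cross_poly_succ; fold Sn.
    replace (- (INR n + 1 + 1 - ((2 * INR n + 3) * Sn - cross_poly n (/ k ^ 2)) / Sn))
      with (INR n + 1 - cross_poly n (/ k ^ 2) / Sn) by (field; lra).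
    unfold Sn; lra.
Qed.

Lemma sqrt2_ge1 : 1 <= sqrt 2.
Proof. rewrite <- sqrt_1; apply sqrt_le_1_alt; lra. Qed.

Lemma linear_regime_bound l0 k N m : 1 < l0 -> 0 <= k -> 1 <= N -> l0 * k <= N ->
  N - k ^ 2 / N <= m -> k / m <= 2 * l0 ^ 2 / (l0 ^ 2 - 1) * (k / (N + 1)).
Proof.
  intros Hl0 Hk HN HkN Hm.
  assert (Hl2 : 1 < l0 ^ 2) by nra.
  assert (Hsq : k ^ 2 / N <= N / l0 ^ 2).
  { apply (Rmult_le_reg_r (N * l0 ^ 2)); [nra |].
    replace (k ^ 2 / N * (N * l0 ^ 2)) with ((l0 * k) ^ 2) by (field; lra).
    replace (N / l0 ^ 2 * (N * l0 ^ 2)) with (N ^ 2) by (field; lra).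
    apply pow_incr; nra. }
  set (c := (N + 1) * (l0 ^ 2 - 1) / (2 * l0 ^ 2)).
  assert (Hc : 0 < c) by (apply Rdiv_lt_0_compat; nra).
  assert (Hcm : c <= N - N / l0 ^ 2).
  { apply (Rmult_le_reg_r (2 * l0 ^ 2)); [lra |]; unfold c.
    replace ((N - N / l0 ^ 2) * (2 * l0 ^ 2)) with (2 * N * (l0 ^ 2 - 1)) by (field; lra).
    field_simplify; [nra | lra]. }
  apply Rle_trans with (k / c); [apply Rdiv_le_contravar_l; lra |].
  right; unfold c; field; lra.
Qed.

Lemma quadratic_regime_bound l0 k N m : 1 < l0 -> 0 <= k -> 2 <= N -> l0 * k ^ 2 < N ->
  N - k ^ 2 / N <= m -> k / m <= 2 * sqrt 2 * (2 / l0 + 1) * (k / (N + 1)).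
Proof.
  intros Hl0 Hk HN HkN Hm.
  set (t := / l0).
  assert (Ht : 0 < t < 1)
    by (split; [apply Rinv_0_lt_compat | rewrite <- Rinv_1; apply Rinv_lt_contravar]; lra).
  assert (Hsq : k ^ 2 / N <= t).
  { apply (Rmult_le_reg_r (N * l0)); [nra |].
    replace (k ^ 2 / N * (N * l0)) with (l0 * k ^ 2) by (field; lra).
    replace (t * (N * l0)) with N by (unfold t; field; lra); lra. }
  pose proof sqrt2_ge1.
  set (c := (N + 1) / (2 * sqrt 2 * (2 * t + 1))).
  assert (Hc : 0 < c) by (apply Rdiv_lt_0_compat; nra).
  assert (Hcm : c <= N - t).
  { apply (Rmult_le_reg_r (2 * sqrt 2 * (2 * t + 1))); [nra |]; unfold c.
    replace ((N + 1) / (2 * sqrt 2 * (2 * t + 1)) * (2 * sqrt 2 * (2 * t + 1))) with (N + 1)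
      by (field; nra).
    assert (HA : N + 1 <= 2 * (2 * t + 1) * (N - t)) by nra.
    assert (HB : 0 <= (sqrt 2 - 1) * (2 * (2 * t + 1) * (N - t))) by (apply Rmult_le_pos; nra).
    nra. }
  apply Rle_trans with (k / c); [apply Rdiv_le_contravar_l; lra |].
  right; unfold c, t; field; repeat split; nra.
Qed.

Theorem lemma5p2 :
  forall lambda0 : R, lambda0 > 1 ->
  exists C0 : R, C0 > 0 /\
  forall (lambda k : R), lambda >= lambda0 -> k >= 1 ->
  forall (n : nat) (dre dim : R),
    derivable_pt_lim (fun r => re (hankel1 n r)) k dre ->
    derivable_pt_lim (fun r => im (hankel1 n r)) k dim ->
    let z := zn_of n k (mkCx dre dim) in
    let m := Cmod (Cadd z Cone) in
    k / m <= 2 * sqrt 2 * k /\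
    (INR n > lambda * k ^ 2 ->
       k / m <= 2 * sqrt 2 * (2 / lambda0 + 1) * (k / (INR n + 1))) /\
    (INR n >= lambda * k -> k / m <= C0 * (k / (INR n + 1))) /\
    m / k <= 1 + INR n / k.
Proof.
  intros l0 Hl0; exists (2 * l0 ^ 2 / (l0 ^ 2 - 1)); split.
  { apply Rdiv_lt_0_compat; nra. }
  intros lam k Hlam Hk n dre dim Dre Dim z m.
  destruct (zn_add1_Cmod_bounds n k dre dim ltac:(lra) Dre Dim) as [Hhalf [Hupper Hlower]].
  fold z m in Hhalf, Hupper, Hlower.
  pose proof sqrt2_ge1; pose proof (pos_INR n).
  repeat split.
  - apply Rle_trans with (k / (1 / 2)); [apply Rdiv_le_contravar_l; lra |].
    replace (k / (1 / 2)) with (2 * k) by field; nra.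
  - intros Hquad.
    assert (Hn : (2 <= n)%nat) by (apply INR_lt; simpl; nra).
    pose proof (le_INR _ _ Hn); simpl INR in *.
    assert (l0 * k ^ 2 <= lam * k ^ 2) by (apply Rmult_le_compat_r; [apply pow2_ge_0 | lra]).
    apply quadratic_regime_bound; [lra | lra | lra | lra | apply Hlower; lia].
  - intros Hlin.
    assert (Hn : (1 <= n)%nat) by (apply INR_lt; simpl; nra).
    pose proof (le_INR _ _ Hn); simpl INR in *.
    assert (l0 * k <= lam * k) by (apply Rmult_le_compat_r; lra).
    apply linear_regime_bound; [lra | lra | lra | lra | apply Hlower; lia].
  - replace (1 + INR n / k) with ((INR n + k) / k) by (field; lra).
    apply Rmult_le_compat_r; [apply Rlt_le, Rinv_0_lt_compat; lra | exact Hupper].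
Qed.
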